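(* Assume the standing assumptions and additionally that every $\sigma_l$ is differentiable everywhere, and let $\Omega=\Omega_{in}$ with $\lambda>0$, $1\le p<\infty$. Then for every $B\in\mathbb{R}$, the set of dimension tuples $\mathbf{d}=(d_1,\dots,d_{L-1})$ for which there exists a proper $B$-local minimum $(\mathbf{d},\mathbf{W})$ of $E$ is bounded.
   Context: Network: for dimensions $d_0,\dots,d_L$ and weights $\mathbf{W}=(W_1,\dots,W_L)$, $W_l\in\mathbb{R}^{d_{l-1}\times d_l}$, define for a row vector $x\in\mathbb{R}^{d_0}$: $x_0=x$, $z_l=x_{l-1}W_l$, $x_l=\sigma_l.(z_l)$ (elementwise), $f(\mathbf{W},x)=x_L$; $d_0,d_L$ are fixed and $d_1,\dots,d_{L-1}$ vary. $E(\mathbf{d},\mathbf{W})=\frac{1}{|D|}\sum_{(x,y)\in D}e(f(\mathbf{W},x),y)+\Omega(\mathbf{W},\lambda,p)$ with $D$ a finite dataset of pairs $(x,y)$, $x\in\mathbb{R}^{d_0}$, $y\in Y$. $\Omega_{in}(\mathbf{W},\lambda,p)=\lambda\sum_{l=1}^L\sum_{j=1}^{d_l}\|(W_l(i,j))_{i}\|_p$, $\Omega_{out}(\mathbf{W},\lambda,p)=\lambda\sum_{l=1}^L\sum_{i=1}^{d_{l-1}}\|(W_l(i,j))_{j}\|_p$. Standing assumptions: each $\sigma_l$ is left- and right-differentiable everywhere, and there are functions $b_{1,l},b_{2,l}:\mathbb{R}_{\ge0}\to\mathbb{R}_{\ge0}$ with $|\sigma_l(s)|\le b_{1,l}(S)|s|$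 and $|\sigma_l^{\leftarrow}(s)|,|\sigma_l^{\rightarrow}(s)|\le b_{2,l}(S)$ whenever $|s|\le S$; $e$ is nonnegative, differentiable in its first argument, and there is $b_3$ with $e(v,y)\le S\Rightarrow\|\partial e(v,y)/\partial v\|_\infty\le b_3(S)$. Definitions: The fan-in of hidden unit $j$ in layer $l$ ($1\le l\le L-1$) is column $j$ of $W_l$; its fan-out is row $j$ of $W_{l+1}$. A pair $(\mathbf{d},\mathbf{W})$ is a local minimum of $E$ if $\mathbf{W}$ is a local minimum of $E(\mathbf{d},\cdot)$ with $\mathbf{d}$ fixed; it is $B$-locally minimal if moreover $E(\mathbf{d},\mathbf{W})\le B$. The proper dimensionality of $\mathbf{W}$ is the dimension tuple obtained by deleting all hidden units whose fan-in or fan-out (or both) is the zero vector; $(\mathbf{d},\mathbf{W})$ is proper if $\mathbf{d}$ equals the proper dimensionality of $\mathbf{W}$ (i.e. no hidden unit has zero fan-in or zero fan-out). A proper $B$-local minimum is a $B$-locally minimal local minimum that is proper. *)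

From Stdlib Require Import Reals.
From mathcomp Require Import ssreflect ssrfun ssrbool eqtype ssrnat seq fintype bigop.

Set Implicit Arguments.
Unset Strict Implicit.
Unset Printing Implicit Defensive.

(** * Conventions
  Layers are numbered 0..L.  [d : nat -> nat] gives the hidden widths
  d_1,...,d_{L-1} (its values outside 1..L-1 are irrelevant); the full width of
  layer l is [dim d0 dL L d l] (= d0 at l=0, dL at l=L).
  Weights: [W : nat -> nat -> nat -> R], [W l i j] = W_l(i,j) for
  1 <= l <= L, i < dim (l-1), j < dim l; other entries are never used. *)

Definition dim (d0 dL L : nat) (d : nat -> nat) (l : nat) : nat :=
  if l == 0 then d0 else if l == L then dL else d l.

Fixpoint act (sigma : nat -> R -> R) (dm : nat -> nat)
    (W : nat -> nat -> nat -> R) (x0 : nat -> R) (l : nat) : nat -> R :=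
  match l with
  | 0 => x0
  | k.+1 => fun j =>
      sigma k.+1 (\big[Rplus/0%R]_(i < dm k) (act sigma dm W x0 k i * W k.+1 i j)%R)
  end.

Definition xin (d0 : nat) (x : 'I_d0 -> R) : nat -> R :=
  fun i => oapp x 0%R (insub i : option 'I_d0).

Definition fnet (sigma : nat -> R -> R) (d0 dL L : nat) (d : nat -> nat)
    (W : nat -> nat -> nat -> R) (x : 'I_d0 -> R) : 'I_dL -> R :=
  fun j => act sigma (dim d0 dL L d) W (xin x) L (nat_of_ord j).

(** |a|^q for real q > 0 (with 0^q = 0; Stdlib's Rpower 0 q is 1) *)
Definition rpow (a q : R) : R :=
  if Req_EM_T a 0 then 0%R else Rpower (Rabs a) q.

Definition fanin_pnorm (p : R) (dm : nat -> nat) (W : nat -> nat -> nat -> R)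
    (l j : nat) : R :=
  rpow (\big[Rplus/0%R]_(i < dm l.-1) rpow (W l i j) p) (/ p).

Definition Omega_in (lambda p : R) (L : nat) (dm : nat -> nat)
    (W : nat -> nat -> nat -> R) : R :=
  (lambda * \big[Rplus/0%R]_(1 <= l < L.+1)
              \big[Rplus/0%R]_(j < dm l) fanin_pnorm p dm W l j)%R.

Definition Eobj (Y : Type) (sigma : nat -> R -> R) (d0 dL L : nat)
    (e : ('I_dL -> R) -> Y -> R) (D : seq (('I_d0 -> R) * Y)) (lambda p : R)
    (d : nat -> nat) (W : nat -> nat -> nat -> R) : R :=
  (/ INR (size D) * \big[Rplus/0%R]_(xy <- D) e (@fnet sigma d0 dL L d W xy.1) xy.2
   + Omega_in lambda p L (dim d0 dL L d) W)%R.

(** (d, W) is a local minimum: W is a local minimum of E(d, .) (the neighbourhood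
    is a sup-norm ball over the actual weight entries) *)
Definition local_min (Y : Type) (sigma : nat -> R -> R) (d0 dL L : nat)
    (e : ('I_dL -> R) -> Y -> R) (D : seq (('I_d0 -> R) * Y)) (lambda p : R)
    (d : nat -> nat) (W : nat -> nat -> nat -> R) : Prop :=
  exists eps : R, (0 < eps)%R /\
    forall W' : nat -> nat -> nat -> R,
      (forall l i j, (1 <= l <= L)%N -> (i < dim d0 dL L d l.-1)%N ->
         (j < dim d0 dL L d l)%N -> (Rabs (W' l i j - W l i j) < eps)%R) ->
      (@Eobj Y sigma d0 dL L e D lambda p d W <= @Eobj Y sigma d0 dL L e D lambda p d W')%R.

(** (d, W) is proper: no hidden unit has zero fan-in (column j of W_l) or zero
    fan-out (row j of W_{l+1}) *)
Definition proper (d0 dL L : nat) (d : nat -> nat) (W : nat -> nat -> nat -> R)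
    : Prop :=
  forall l j, (1 <= l <= L.-1)%N -> (j < d l)%N ->
    (exists i, (i < dim d0 dL L d l.-1)%N /\ W l i j <> 0%R) /\
    (exists k, (k < dim d0 dL L d l.+1)%N /\ W l.+1 j k <> 0%R).

Definition proper_B_local_min (Y : Type) (sigma : nat -> R -> R) (d0 dL L : nat)
    (e : ('I_dL -> R) -> Y -> R) (D : seq (('I_d0 -> R) * Y)) (lambda p B : R)
    (d : nat -> nat) (W : nat -> nat -> nat -> R) : Prop :=
  @local_min Y sigma d0 dL L e D lambda p d W /\
  (@Eobj Y sigma d0 dL L e D lambda p d W <= B)%R /\
  proper d0 dL L d W.

Definition right_deriv (f : R -> R) (x l : R) : Prop :=
  forall eps : R, (0 < eps)%R -> exists delta : R, (0 < delta)%R /\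
    forall h : R, (0 < h < delta)%R -> (Rabs ((f (x + h) - f x) / h - l) < eps)%R.
Definition left_deriv (f : R -> R) (x l : R) : Prop :=
  forall eps : R, (0 < eps)%R -> exists delta : R, (0 < delta)%R /\
    forall h : R, (- delta < h < 0)%R -> (Rabs ((f (x + h) - f x) / h - l) < eps)%R.

Definition supnorm (n : nat) (v : 'I_n -> R) : R :=
  \big[Rmax/0%R]_(i < n) Rabs (v i).

Definition frechet_grad (n : nat) (F : ('I_n -> R) -> R) (v g : 'I_n -> R)
    : Prop :=
  forall eps : R, (0 < eps)%R -> exists delta : R, (0 < delta)%R /\
    forall h : 'I_n -> R, (supnorm h < delta)%R ->
      (Rabs (F (fun i => v i + h i)%R - F v - \big[Rplus/0%R]_(i < n) (g i * h i))
        <= eps * supnorm h)%R.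

(* At a point with E <= B, Omega_in <= B bounds the sum over each layer of the fan-in
   norms N_(l,j) by |B|/lambda, hence all weights, activations and loss terms, uniformly in
   the widths.  Local minimality is then tested against perturbations scaling weights by
   1 - t.  Scaling the fan-in of a hidden unit j saves lambda t N_j in Omega_in but moves
   the loss by O(t N_j R_j), R_j the l1 norm of the fan-out of j: so R_j is bounded below.
   Scaling a single fan-out weight w of j saves about lambda t |w|^p / N^(p-1) (N the
   fan-in norm of its target) and costs O(t N_j |w|): so |w| <= eps N when N_j is small.
   Both together force N_j >= c > 0 at a proper minimum, and the width of the layer is at
   most |B| / (lambda c). *)

From Stdlib Require Import Reals Lra Lia FunctionalExtensionality.
From mathcomp Require Import ssreflect ssrfun ssrbool eqtype ssrnat seq fintype bigop.
From mathcomp Require Import zify.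
From HB Require Import structures.
Set Warnings "-notation-overridden -redundant-canonical-projection".
Set Implicit Arguments.
Unset Strict Implicit.
Open Scope R_scope.

Lemma RplusA : associative Rplus. Proof. by move=> x y z; rewrite Rplus_assoc. Qed.
HB.instance Definition _ := Monoid.isComLaw.Build R 0 Rplus RplusA Rplus_comm Rplus_0_l.

Section RealSums.
Variable I : Type.
Implicit Types (r : seq I) (P : pred I) (F G : I -> R).

Lemma sum_le r P F G : (forall i, P i -> F i <= G i) ->
  \big[Rplus/0]_(i <- r | P i) F i <= \big[Rplus/0]_(i <- r | P i) G i.
Proof. by move=> H; apply: (big_ind2 (fun x y => x <= y)) => *; lra || apply: H. Qed.

Lemma sum_ge0 r P F : (forall i, P i -> 0 <= F i) -> 0 <= \big[Rplus/0]_(i <- r | P i) F i.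
Proof. by move=> H; apply: (big_ind (fun x => 0 <= x)) => *; lra || apply: H. Qed.

Lemma Rabs_sum_le r P F :
  Rabs (\big[Rplus/0]_(i <- r | P i) F i) <= \big[Rplus/0]_(i <- r | P i) Rabs (F i).
Proof.
apply: (big_ind2 (fun x y => Rabs x <= y)); first by rewrite Rabs_R0; lra.
  by move=> x1 x2 y1 y2 h1 h2; apply: Rle_trans (Rabs_triang _ _) _; lra.
by move=> *; lra.
Qed.

Lemma sum_mull r P F c :
  \big[Rplus/0]_(i <- r | P i) (c * F i) = c * \big[Rplus/0]_(i <- r | P i) F i.
Proof. by apply: (big_ind2 (fun x y => x = c * y)) => [|? ? ? ? -> ->|]; rewrite //=; ring. Qed.

Lemma sumB r P F G : \big[Rplus/0]_(i <- r | P i) (F i - G i) =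
  \big[Rplus/0]_(i <- r | P i) F i - \big[Rplus/0]_(i <- r | P i) G i.
Proof.
elim: r => [|a r IH]; rewrite ?big_nil ?big_cons; first ring.
by case: (P a); rewrite IH; ring.
Qed.

Lemma sum_In_le r F a : (forall i, 0 <= F i) -> List.In a r ->
  F a <= \big[Rplus/0]_(i <- r) F i.
Proof.
move=> F_ge0; elim: r => [|b r IH] //= [<-|ar]; rewrite big_cons.
  by have := @sum_ge0 r (fun _ => true) F (fun i _ => F_ge0 i); lra.
by have := IH ar; have := F_ge0 b; lra.
Qed.

Lemma sum_sub_le_size r F G Q : (forall a, List.In a r -> Rabs (F a - G a) <= Q) ->
  \big[Rplus/0]_(i <- r) F i - \big[Rplus/0]_(i <- r) G i <= INR (size r) * Q.
Proof.
elim: r => [|b r IH] H; rewrite ?big_nil ?big_cons; first by rewrite /= Rmult_0_l; lra.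
have := H b (or_introl erefl); have := IH (fun a ar => H a (or_intror ar)).
have -> : size (b :: r) = (size r).+1 by [].
by rewrite S_INR; have := Rle_abs (F b - G b); lra.
Qed.
End RealSums.

Lemma sum_mem_le (I : eqType) (r : seq I) (F : I -> R) a :
  (forall i, 0 <= F i) -> a \in r -> F a <= \big[Rplus/0]_(i <- r) F i.
Proof.
move=> F_ge0; elim: r => [|b r IH] //; rewrite inE big_cons => /orP [/eqP ->|ar].
  by have := @sum_ge0 _ r (fun _ => true) F (fun i _ => F_ge0 i); lra.
by have := IH ar; have := F_ge0 b; lra.
Qed.

Lemma sum_ord_le n (F : nat -> R) j : (j < n)%N -> (forall i, 0 <= F i) ->
  F j <= \big[Rplus/0]_(i < n) F i.
Proof.
move=> jn F_ge0; apply: (@sum_mem_le _ _ (fun i : 'I_n => F i) (Ordinal jn)) => //.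
exact: mem_index_enum.
Qed.

Lemma sum_ord_eq1 n (F : nat -> R) j : (j < n)%N ->
  (forall i, (i < n)%N -> i <> j -> F i = 0) -> \big[Rplus/0]_(i < n) F i = F j.
Proof.
move=> jn H; rewrite (bigD1 (Ordinal jn)) //= big1 ?Rplus_0_r // => i /eqP ij.
by apply: H (ltn_ord i) _ => eij; apply: ij; apply: val_inj.
Qed.

Lemma sum_nat_eq1 m n (F : nat -> R) j : (m <= j < n)%N ->
  (forall i, (m <= i < n)%N -> i <> j -> F i = 0) -> \big[Rplus/0]_(m <= i < n) F i = F j.
Proof.
move=> jmn H; rewrite (bigD1_seq j) ?mem_index_iota ?iota_uniq //=.
rewrite big1_seq ?Rplus_0_r // => i /andP [/eqP ij]; rewrite mem_index_iota => imn.
exact: H.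
Qed.

Lemma sum_const_ord n c : \big[Rplus/0]_(i < n) c = INR n * c.
Proof.
rewrite big_const_ord; elim: n => [|n IH]; first by rewrite /= Rmult_0_l.
by rewrite S_INR Rmult_plus_distr_r -IH /=; ring.
Qed.

Lemma Rabs_sum_mul_le m (a w : nat -> R) c : (forall i, (i < m)%N -> Rabs (w i) <= c) ->
  Rabs (\big[Rplus/0]_(i < m) (a i * w i)) <= \big[Rplus/0]_(i < m) Rabs (a i) * c.
Proof.
move=> w_le; apply: Rle_trans (@Rabs_sum_le _ _ _ _) _.
rewrite Rmult_comm -sum_mull; apply: sum_le => i _.
rewrite Rabs_mult Rmult_comm; apply: Rmult_le_compat_r; [exact: Rabs_pos | exact: w_le].
Qed.

Lemma sum_Rabs_sum_mul_le m k (a : nat -> R) (W : nat -> nat -> R) c :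
  (forall i, (i < m)%N -> \big[Rplus/0]_(j < k) Rabs (W i j) <= c) ->
  \big[Rplus/0]_(j < k) Rabs (\big[Rplus/0]_(i < m) (a i * W i j))
    <= \big[Rplus/0]_(i < m) Rabs (a i) * c.
Proof.
move=> W_le; apply: (@Rle_trans _
  (\big[Rplus/0]_(j < k) \big[Rplus/0]_(i < m) (Rabs (a i) * Rabs (W i j)))).
  apply: sum_le => j _; apply: Rle_trans (@Rabs_sum_le _ _ _ _) _.
  by apply: sum_le => i _; rewrite Rabs_mult; lra.
rewrite exchange_big /= Rmult_comm -sum_mull; apply: sum_le => i _.
rewrite sum_mull Rmult_comm; apply: Rmult_le_compat_r; [exact: Rabs_pos | exact: W_le].
Qed.

Lemma rpow_ge0 a q : 0 <= rpow a q.
Proof. rewrite /rpow; case: (Req_EM_T a 0) => a0 /=; [lra | exact/Rlt_le/exp_pos]. Qed.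

Lemma rpow_neq0 a q : a <> 0 -> rpow a q = Rpower (Rabs a) q.
Proof. by rewrite /rpow; case: (Req_EM_T a 0). Qed.

Lemma rpowZ c a q : 0 < c -> rpow (c * a) q = Rpower c q * rpow a q.
Proof.
move=> c_gt0; have [->|a0] := Req_dec a 0.
  by rewrite Rmult_0_r /rpow; case: (Req_EM_T 0 0) => h /=; lra.
have ca0 : c * a <> 0 by apply: Rmult_integral_contrapositive; lra.
rewrite !rpow_neq0 // Rabs_mult (Rabs_pos_eq c) ?Rpower_mult_distr //; try lra.
exact: Rabs_pos_lt.
Qed.

Lemma Rpower_Vp A p : 0 < A -> 0 < p -> Rpower (Rpower A (/ p)) p = A.
Proof. by move=> A_gt0 p_gt0; rewrite Rpower_mult Rinv_l ?Rpower_1 //; lra. Qed.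

Lemma Rpower_pV A p : 0 < A -> 0 < p -> Rpower (Rpower A p) (/ p) = A.
Proof. by move=> A_gt0 p_gt0; rewrite Rpower_mult Rinv_r ?Rpower_1 //; lra. Qed.

Lemma Rpower_sub_le a b p : 0 < b <= a -> 1 <= p ->
  Rpower a p - Rpower b p <= p * Rpower a (p - 1) * (a - b).
Proof.
move=> ba p_ge1; have [->|ba'] := Req_dec b a; first by have := exp_pos ((p - 1) * ln a); nra.
have [c [-> cba]] := MVT_cor2 (fun x => Rpower x p) (fun x => p * Rpower x (p - 1)) b a
  ltac:(lra) (fun c cba => derivable_pt_lim_power c p ltac:(lra)).
have : Rpower c (p - 1) <= Rpower a (p - 1) by apply: Rle_Rpower_l; lra.
by move=> ca; apply: Rmult_le_compat_r; [lra | apply: Rmult_le_compat_l; lra].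
Qed.

Lemma Rpower_1m_le t p : 0 < t < 1 -> 1 <= p -> Rpower (1 - t) p <= 1 - t.
Proof.
move=> t01 p_ge1; rewrite /Rpower -{2}(exp_ln (1 - t)); last lra.
have : ln (1 - t) < 0 by rewrite -ln_1; apply: ln_increasing; lra.
move=> ln_lt0; have [->|p_gt1] := Req_dec p 1; first by rewrite Rmult_1_l; lra.
by apply/Rlt_le/exp_increasing; nra.
Qed.

Definition pnorm (p : R) (n : nat) (c : nat -> R) : R :=
  rpow (\big[Rplus/0]_(i < n) rpow (c i) p) (/ p).

Lemma pnorm_ge0 p n c : 0 <= pnorm p n c.
Proof. exact: rpow_ge0. Qed.

Lemma pnorm_ext p n c c' : (forall i, (i < n)%N -> c' i = c i) -> pnorm p n c' = pnorm p n c.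
Proof. by move=> cc'; rewrite /pnorm; congr rpow; apply: eq_bigr => i _; rewrite cc'. Qed.

Section PNorm.
Variables (p : R) (n : nat).
Hypothesis p_ge1 : 1 <= p.

Let p_gt0 : 0 < p. Proof. lra. Qed.
Let invp_gt0 : 0 < / p. Proof. exact: Rinv_0_lt_compat. Qed.

Lemma pnormE (c : nat -> R) : 0 < \big[Rplus/0]_(i < n) rpow (c i) p ->
  pnorm p n c = Rpower (\big[Rplus/0]_(i < n) rpow (c i) p) (/ p).
Proof. by move=> S_gt0; rewrite /pnorm rpow_neq0 ?Rabs_pos_eq //; lra. Qed.

Lemma abs_le_pnorm (c : nat -> R) i : (i < n)%N -> Rabs (c i) <= pnorm p n c.
Proof.
move=> i_lt; have [->|ci0] := Req_dec (c i) 0; first by rewrite Rabs_R0; exact: pnorm_ge0.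
have ci_le := @sum_ord_le _ (fun i => rpow (c i) p) _ i_lt (fun i => rpow_ge0 _ _).
have ci_gt0 : 0 < Rabs (c i) by apply: Rabs_pos_lt.
rewrite /= rpow_neq0 // in ci_le.
rewrite pnormE; last exact: Rlt_le_trans (exp_pos _) ci_le.
rewrite -{1}(Rpower_pV ci_gt0 p_gt0); apply: Rle_Rpower_l; first lra.
by split; [exact: exp_pos | exact: ci_le].
Qed.

Lemma pnormZ s (c : nat -> R) : 0 < s -> pnorm p n (fun i => s * c i) = s * pnorm p n c.
Proof.
move=> s_gt0; rewrite /pnorm; under eq_bigr => i _ do rewrite rpowZ //.
by rewrite sum_mull rpowZ ?Rpower_pV //; exact: exp_pos.
Qed.

(* The decrease is bounded below through the mean value theorem applied to x |-> x^p
   between the two norms. *)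
Lemma pnorm_shrink1 (c : nat -> R) j t : (j < n)%N -> c j <> 0 -> 0 < t < 1 ->
  t * Rpower (Rabs (c j)) p / (p * Rpower (pnorm p n c) (p - 1))
  <= pnorm p n c - pnorm p n (fun i => if i == j then (1 - t) * c i else c i).
Proof.
move=> j_lt cj0 t01; set c' := fun i => _.
set u := Rpower (Rabs (c j)) p; have u_gt0 : 0 < u := exp_pos _.
set S := \big[Rplus/0]_(i < n) rpow (c i) p.
set S' := \big[Rplus/0]_(i < n) rpow (c' i) p.
have cj_le : u <= S.
  have := @sum_ord_le _ (fun i => rpow (c i) p) _ j_lt (fun i => rpow_ge0 _ _).
  by rewrite /= rpow_neq0.
have c'j : rpow (c' j) p = Rpower (1 - t) p * u by rewrite /c' eqxx rpowZ ?rpow_neq0 //; lra.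
have c'j_le : Rpower (1 - t) p * u <= S'.
  by rewrite -c'j; exact: (@sum_ord_le _ (fun i => rpow (c' i) p) _ j_lt (fun i => rpow_ge0 _ _)).
have SS' : S - S' = u - Rpower (1 - t) p * u.
  rewrite -c'j -sumB (@sum_ord_eq1 _ (fun i => rpow (c i) p - rpow (c' i) p) _ j_lt) => [|i _ ij].
    by rewrite rpow_neq0.
  by rewrite /c'; case: eqP => // _; ring.
have shrink_le := Rpower_1m_le t01 p_ge1.
have pos1 : 0 < Rpower (1 - t) p := exp_pos _.
have S'_gt0 : 0 < S' by nra.
have S_gt0 : 0 < S by lra.
rewrite !pnormE //.
have S'_le : Rpower S' (/ p) <= Rpower S (/ p) by apply: Rle_Rpower_l; [lra | split; nra].
have := Rpower_sub_le (conj (exp_pos _) S'_le) p_ge1; rewrite !Rpower_Vp; try lra.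
set X := p * _; have X_gt0 : 0 < X by apply: Rmult_lt_0_compat; [lra | exact: exp_pos].
rewrite -/S -/S' => mvt; apply: (Rmult_le_reg_l X) => //.
have -> : X * (t * u / X) = t * u by field; lra.
by change (exp (/ p * ln S')) with (Rpower S' (/ p)) in mvt; nra.
Qed.
End PNorm.

Definition near_0plus (P : R -> Prop) : Prop :=
  exists tau, 0 < tau /\ forall t, 0 < t < tau -> P t.

Lemma near_0plus_and {P Q : R -> Prop} :
  near_0plus P -> near_0plus Q -> near_0plus (fun t => P t /\ Q t).
Proof.
move=> [a [a_gt0 Pa]] [b [b_gt0 Qb]]; exists (Rmin a b); split; first exact: Rmin_glb_lt.
move=> t t_lt; have := Rmin_l a b; have := Rmin_r a b.
by split; [apply: Pa | apply: Qb]; lra.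
Qed.

Lemma near_0plus_mono {P Q : R -> Prop} : (forall t, 0 < t -> P t -> Q t) ->
  near_0plus P -> near_0plus Q.
Proof. by move=> PQ [a [a_gt0 Pa]]; exists a; split => // t t_lt; apply: PQ (Pa t t_lt); lra. Qed.

Lemma near_0plus_mul_lt k c : 0 <= k -> 0 < c -> near_0plus (fun t => k * t < c).
Proof.
move=> k_ge0 c_gt0; exists (c / (k + 1)); split; first by apply: Rdiv_lt_0_compat; lra.
move=> t [t_gt0 t_lt]; have := Rmult_lt_compat_l (k + 1) _ _ ltac:(lra) t_lt.
by rewrite (_ : (k + 1) * (c / (k + 1)) = c); [nra | field; lra].
Qed.

Lemma near_0plus_all (T : Type) (r : seq T) (P : T -> R -> Prop) :
  (forall a, List.In a r -> near_0plus (P a)) ->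
  near_0plus (fun t => forall a, List.In a r -> P a t).
Proof.
elim: r => [|b r IH] Pr; first by exists 1; split => [|t _ a []]; lra.
have := near_0plus_and (Pr b (or_introl erefl)) (IH (fun a ar => Pr a (or_intror ar))).
apply: near_0plus_mono => t _ [Pb Pr'] a [<-|ar]; [exact: Pb | exact: Pr'].
Qed.

Lemma near_0plus_witness {P : R -> Prop} : near_0plus P -> exists t, 0 < t < 1 /\ P t.
Proof.
move=> [a [a_gt0 Pa]]; exists (Rmin a 1 / 2).
have := Rmin_l a 1; have := Rmin_r a 1; have := Rmin_glb_lt _ _ _ a_gt0 Rlt_0_1.
by move=> *; split; [|apply: Pa]; lra.
Qed.

Lemma derivable_pt_lim_right_deriv {f x g r} :
  derivable_pt_lim f x g -> right_deriv f x r -> g = r.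
Proof.
move=> fg fr; apply: cond_eq => eps eps_gt0.
have [d1 Hd1] := fg (eps / 2) ltac:(lra).
have [d2 [d2_gt0 Hd2]] := fr (eps / 2) ltac:(lra).
set h := Rmin d1 d2 / 2; have d1_gt0 := cond_pos d1.
have := Rmin_l d1 d2; have := Rmin_r d1 d2; have := Rmin_glb_lt _ _ _ d1_gt0 d2_gt0.
move=> m_gt0 m_le2 m_le1; have h_gt0 : 0 < h by rewrite /h; lra.
have := Hd1 h ltac:(lra) ltac:(rewrite Rabs_pos_eq /h; lra).
have := Hd2 h ltac:(rewrite /h; lra).
set q := (f (x + h) - f x) / h => qr qg.
have := Rabs_triang (g - q) (q - r); rewrite -Rabs_Ropp Ropp_minus_distr in qg.
by replace (g - q + (q - r)) with (g - r) by ring; lra.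
Qed.

Lemma Rabs_sub_le_bounded_deriv (f f' : R -> R) (M T u v : R) :
  (forall s, exists g, derivable_pt_lim f s g) -> (forall s, right_deriv f s (f' s)) ->
  (forall s, Rabs s <= T -> Rabs (f' s) <= M) ->
  Rabs u <= T -> Rabs v <= T -> Rabs (f u - f v) <= M * Rabs (u - v).
Proof.
move=> f_der f_r f'_le u_le v_le.
have f'_der s : derivable_pt_lim f s (f' s).
  by have [g fg] := f_der s; rewrite -(derivable_pt_lim_right_deriv fg (f_r s)).
have [c [-> c_in]] := MVT_abs f f' v u (fun c _ => f'_der c).
apply: Rmult_le_compat_r; first exact: Rabs_pos.
have bounds x : Rabs x <= T -> - T <= x <= T.
  by move=> x_le; have := Rle_abs x; have := Rle_abs (- x); rewrite Rabs_Ropp; lra.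
move: u_le v_le => /bounds u_le /bounds v_le; apply/f'_le/Rabs_le.
by have := Rmin_glb v u (- T); have := Rmax_lub v u T; lra.
Qed.

Lemma supnorm_le_sum n (v : 'I_n -> R) : supnorm v <= \big[Rplus/0]_(i < n) Rabs (v i).
Proof.
suff : 0 <= supnorm v <= \big[Rplus/0]_(i < n) Rabs (v i) by case.
apply: (big_ind2 (fun x y => 0 <= x <= y)); first lra.
  move=> x1 x2 y1 y2 h1 h2; split; first by apply: Rle_trans (Rmax_l _ _); lra.
  by apply: Rmax_lub; lra.
by move=> i _; have := Rabs_pos (v i); lra.
Qed.

Lemma Rabs_le_supnorm n (v : 'I_n -> R) i : Rabs (v i) <= supnorm v.
Proof.
rewrite /supnorm; have : i \in index_enum 'I_n by rewrite mem_index_enum.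
elim: (index_enum 'I_n) => [|a r IH] //; rewrite inE big_cons => /orP [/eqP ->|ir].
  exact: Rmax_l.
by apply: Rle_trans (Rmax_r _ _); exact: IH.
Qed.

Lemma Rabs_dot_le n (g h : 'I_n -> R) :
  Rabs (\big[Rplus/0]_(i < n) (g i * h i)) <= supnorm g * \big[Rplus/0]_(i < n) Rabs (h i).
Proof.
apply: Rle_trans (@Rabs_sum_le _ _ _ _) _; rewrite -sum_mull; apply: sum_le => i _.
by rewrite Rabs_mult; apply: Rmult_le_compat_r; [exact: Rabs_pos | exact: Rabs_le_supnorm].
Qed.

Lemma frechet_grad_lipschitz n (F : ('I_n -> R) -> R) v g M :
  frechet_grad F v g -> supnorm g <= M ->
  exists delta, 0 < delta /\ forall w, \big[Rplus/0]_(i < n) Rabs (w i - v i) < delta ->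
    Rabs (F w - F v) <= (M + 1) * \big[Rplus/0]_(i < n) Rabs (w i - v i).
Proof.
move=> Fg g_le; have [delta [delta_gt0 Hdelta]] := Fg 1 Rlt_0_1.
exists delta; split => // w w_near; set h := fun i => w i - v i.
have h_le := supnorm_le_sum h; have dot_le := Rabs_dot_le g h.
have := Hdelta h ltac:(rewrite /h in h_le *; lra).
have -> : (fun i => v i + h i) = w by apply: functional_extensionality => i; rewrite /h; ring.
set S := \big[Rplus/0]_(i < n) Rabs (h i) in h_le dot_le *.
set P := \big[Rplus/0]_(i < n) (g i * h i) in dot_le * => rem_le.
have S_ge0 : 0 <= S by apply: sum_ge0 => *; exact: Rabs_pos.
have : Rabs (F w - F v) <= Rabs (F w - F v - P) + Rabs P.
  by rewrite -{1}(Rplus_0_r (F w - F v)) -(Rplus_opp_l P) -Rplus_assoc; exact: Rabs_triang.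
have : supnorm g * S <= M * S by apply: Rmult_le_compat_r.
lra.
Qed.

Definition preact (dm : nat -> nat) (W : nat -> nat -> nat -> R) n (a : nat -> R) k : R :=
  \big[Rplus/0]_(i < dm n.-1) (a i * W n i k).

Lemma preactB dm W n (a a' : nat -> R) k :
  preact dm W n a' k - preact dm W n a k = preact dm W n (fun i => a' i - a i) k.
Proof. by rewrite /preact -sumB; apply: eq_bigr => i _; ring. Qed.

Section ProperLocalMinima.
Variables (L d0 dL : nat) (sigma sigr : nat -> R -> R) (b1 b2 : nat -> R -> R).
Hypothesis L_ge1 : (1 <= L)%N.
Hypothesis sigma_r : forall l s, (1 <= l <= L)%N -> right_deriv (sigma l) s (sigr l s).
Hypothesis sigma_diff : forall l s, (1 <= l <= L)%N -> exists g, derivable_pt_lim (sigma l) s g.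
Hypothesis b1_ge0 : forall l T, 0 <= T -> 0 <= b1 l T.
Hypothesis b2_ge0 : forall l T, 0 <= T -> 0 <= b2 l T.
Hypothesis sigma_le : forall l T s, (1 <= l <= L)%N -> 0 <= T -> Rabs s <= T ->
  Rabs (sigma l s) <= b1 l T * Rabs s.
Hypothesis sigr_le : forall l T s, (1 <= l <= L)%N -> 0 <= T -> Rabs s <= T ->
  Rabs (sigr l s) <= b2 l T.
Variables (Y : Type) (e : ('I_dL -> R) -> Y -> R) (b3 : R -> R).
Variable grad_e : ('I_dL -> R) -> Y -> 'I_dL -> R.
Hypothesis e_ge0 : forall v y, 0 <= e v y.
Hypothesis b3_ge0 : forall T, 0 <= T -> 0 <= b3 T.
Hypothesis e_grad : forall v y, frechet_grad (fun u => e u y) v (grad_e v y).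
Hypothesis grad_e_le : forall v y T, 0 <= T -> e v y <= T -> supnorm (grad_e v y) <= b3 T.
Variables (D : seq (('I_d0 -> R) * Y)) (lambda p B : R).
Hypotheses (lambda_gt0 : 0 < lambda) (p_ge1 : 1 <= p).

Local Notation dm d := (dim d0 dL L d).
Local Notation actv d W x := (act sigma (dm d) W (xin x)).
Local Notation E d W := (@Eobj Y sigma d0 dL L e D lambda p d W).
Local Notation Omega d W := (Omega_in lambda p L (dm d) W).
Local Notation loss d W xy := (e (@fnet sigma d0 dL L d W xy.1) xy.2).

Definition layer_map dm W n (a : nat -> R) : nat -> R := fun k => sigma n (preact dm W n a k).

Fixpoint propagate dm W k m (a : nat -> R) : nat -> R :=
  if k is k'.+1 then propagate dm W k' m.+1 (layer_map dm W m.+1 a) else a.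

(* Omega_in <= E <= B bounds the sum of the fan-in norms of a layer by [weight_bound],
   hence also every weight and every row sum; each loss term is at most [loss_bound]. *)
Definition weight_bound := Rabs B / lambda.
Definition loss_bound := INR (size D) * Rabs B.

Definition weights_bounded d (W : nat -> nat -> nat -> R) :=
  (forall l i k, (1 <= l <= L)%N -> (i < dm d l.-1)%N -> (k < dm d l)%N ->
     Rabs (W l i k) <= weight_bound) /\
  (forall l i, (1 <= l <= L)%N -> (i < dm d l.-1)%N ->
     \big[Rplus/0]_(k < dm d l) Rabs (W l i k) <= weight_bound).

Definition losses_bounded d W := forall xy, List.In xy D -> loss d W xy <= loss_bound.

Lemma weight_bound_ge0 : 0 <= weight_bound.
Proof. exact: Rmult_le_pos (Rabs_pos B) (Rlt_le _ _ (Rinv_0_lt_compat _ lambda_gt0)). Qed.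

Lemma loss_bound_ge0 : 0 <= loss_bound.
Proof. exact: Rmult_le_pos (pos_INR _) (Rabs_pos B). Qed.

Lemma dim_L d : dm d L = dL.
Proof. by rewrite /dim; case: eqP => [L0|]; [move: L_ge1; rewrite L0 | rewrite eqxx]. Qed.

Lemma dim_hidden d l : (1 <= l < L)%N -> dm d l = d l.
Proof.
by move=> /andP [l_ge1 l_lt]; rewrite /dim; case: eqP => [|_]; [lia | case: eqP => //; lia].
Qed.

Lemma Omega_ge0 d W : 0 <= Omega d W.
Proof.
rewrite /Omega_in; apply: Rmult_le_pos; first lra.
by apply: sum_ge0 => l _; apply: sum_ge0 => j _; exact: rpow_ge0.
Qed.

Lemma sum_loss_ge0 d W : 0 <= \big[Rplus/0]_(xy <- D) loss d W xy.
Proof. by apply: sum_ge0 => *; exact: e_ge0. Qed.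

Lemma Omega_le_objective d W : Omega d W <= E d W.
Proof.
have := sum_loss_ge0 d W; have : 0 <= / INR (size D).
  by case: (size D) => [|n]; [rewrite Rinv_0; lra | exact/Rlt_le/Rinv_0_lt_compat/lt_0_INR/ltP].
by rewrite /Eobj; nra.
Qed.

Lemma sum_fanin_pnorm_le d W l : E d W <= B -> (1 <= l <= L)%N ->
  \big[Rplus/0]_(j < dm d l) fanin_pnorm p (dm d) W l j <= weight_bound.
Proof.
move=> E_le l_in; have := Omega_le_objective d W; rewrite /Omega_in => Om_le.
have l_le : \big[Rplus/0]_(j < dm d l) fanin_pnorm p (dm d) W l j <=
    \big[Rplus/0]_(1 <= l' < L.+1) \big[Rplus/0]_(j < dm d l') fanin_pnorm p (dm d) W l' j.
  apply: (@sum_mem_le _ _ (fun l => \big[Rplus/0]_(j < dm d l) fanin_pnorm p (dm d) W l j)).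
    by move=> l'; apply: sum_ge0 => j _; exact: rpow_ge0.
  by rewrite mem_index_iota; lia.
apply: (Rmult_le_reg_l lambda) => //.
rewrite /weight_bound /Rdiv -Rmult_assoc Rinv_r_simpl_m; last lra.
by have := Rle_abs B; have := Rmult_le_compat_l _ _ _ (Rlt_le _ _ lambda_gt0) l_le; lra.
Qed.

Lemma weights_bounded_objective d W : E d W <= B -> weights_bounded d W.
Proof.
move=> E_le; have abs_le l i k : (i < dm d l.-1)%N -> Rabs (W l i k) <= fanin_pnorm p (dm d) W l k.
  exact: (@abs_le_pnorm p _ p_ge1 (fun i => W l i k)).
split=> [l i k l_in i_lt k_lt | l i l_in i_lt]; apply: Rle_trans _ (sum_fanin_pnorm_le E_le l_in).
  apply: Rle_trans (abs_le _ _ _ i_lt) _.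
  exact: (@sum_ord_le _ (fun k => fanin_pnorm p (dm d) W l k) _ k_lt (fun _ => rpow_ge0 _ _)).
by apply: sum_le => k _; exact: abs_le.
Qed.

Lemma losses_bounded_objective d W : E d W <= B -> losses_bounded d W.
Proof.
move=> E_le xy xyD; have size_gt0 : 0 < INR (size D) by apply/lt_0_INR/ltP; move: xyD; case: (D).
have := @sum_In_le _ D (fun xy => loss d W xy) xy (fun _ => e_ge0 _ _) xyD.
have := Omega_ge0 d W; have := Rle_abs B; move: E_le; rewrite /Eobj /loss_bound.
set S := \big[Rplus/0]_(xy <- D) _ => E_le B_le Om_ge0 l_le.
suff : S <= INR (size D) * Rabs B by lra.
apply: (Rmult_le_reg_l (/ INR (size D))); first exact: Rinv_0_lt_compat.
by rewrite -Rmult_assoc Rinv_l; lra.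
Qed.

Lemma preact_le d W n (a : nat -> R) X k : weights_bounded d W -> (1 <= n <= L)%N ->
  (k < dm d n)%N -> \big[Rplus/0]_(i < dm d n.-1) Rabs (a i) <= X ->
  Rabs (preact (dm d) W n a k) <= X * weight_bound.
Proof.
move=> [W_le _] n_in k_lt a_le.
apply: Rle_trans (Rabs_sum_mul_le _ (fun i i_lt => W_le _ _ _ n_in i_lt k_lt)) _.
exact: Rmult_le_compat_r weight_bound_ge0 a_le.
Qed.

Lemma preact_le_fanin d W n (a : nat -> R) X k :
  \big[Rplus/0]_(i < dm d n.-1) Rabs (a i) <= X ->
  Rabs (preact (dm d) W n a k) <= X * fanin_pnorm p (dm d) W n k.
Proof.
move=> a_le; apply: Rle_trans (Rabs_sum_mul_le _ (fun i i_lt =>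
  @abs_le_pnorm p _ p_ge1 (fun i => W n i k) i i_lt)) _.
exact: Rmult_le_compat_r (rpow_ge0 _ _) a_le.
Qed.

Lemma sum_preact_le d W n (a : nat -> R) : weights_bounded d W -> (1 <= n <= L)%N ->
  \big[Rplus/0]_(k < dm d n) Rabs (preact (dm d) W n a k)
  <= \big[Rplus/0]_(i < dm d n.-1) Rabs (a i) * weight_bound.
Proof. by move=> [_ W_le] n_in; apply: sum_Rabs_sum_mul_le => i; exact: W_le. Qed.

Lemma act_l1_bounded n : (n <= L)%N -> exists X, 0 <= X /\
  forall d W, weights_bounded d W -> forall xy, List.In xy D ->
    \big[Rplus/0]_(i < dm d n) Rabs (actv d W xy.1 n i) <= X.
Proof.
elim: n => [|n IH] n_le.
  exists (\big[Rplus/0]_(xy <- D) \big[Rplus/0]_(i < d0) Rabs (xy.1 i)).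
  split=> [|d W _ xy xyD]; first by apply: sum_ge0 => xy _; apply: sum_ge0 => i _; exact: Rabs_pos.
  have -> : \big[Rplus/0]_(i < dm d 0) Rabs (actv d W xy.1 0 i) =
      \big[Rplus/0]_(i < d0) Rabs (xy.1 i).
    by apply: eq_bigr => i _ /=; rewrite /xin valK.
  apply: (@sum_In_le _ D (fun xy => \big[Rplus/0]_(i < d0) Rabs (xy.1 i))) => // ?.
  by apply: sum_ge0 => *; exact: Rabs_pos.
have [X [X_ge0 act_le]] := IH (ltnW n_le); have B_ge0 := weight_bound_ge0.
have T_ge0 : 0 <= X * weight_bound by exact: Rmult_le_pos.
have n_in : (1 <= n.+1 <= L)%N by rewrite n_le.
exists (b1 n.+1 (X * weight_bound) * (X * weight_bound)).
split; first by apply: Rmult_le_pos => //; exact: b1_ge0.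
move=> d W Wb xy xyD; have a_le := act_le d W Wb xy xyD.
apply: (@Rle_trans _ (\big[Rplus/0]_(k < dm d n.+1)
   (b1 n.+1 (X * weight_bound) * Rabs (preact (dm d) W n.+1 (actv d W xy.1 n) k)))).
  by apply: sum_le => k _; apply: sigma_le => //; exact: preact_le Wb n_in (ltn_ord k) a_le.
rewrite sum_mull; apply: Rmult_le_compat_l; first exact: b1_ge0.
apply: Rle_trans (sum_preact_le _ Wb n_in) _.
exact: Rmult_le_compat_r B_ge0 a_le.
Qed.

Lemma sigma_lipschitz n T u v : (1 <= n <= L)%N -> 0 <= T -> Rabs u <= T -> Rabs v <= T ->
  Rabs (sigma n u - sigma n v) <= b2 n T * Rabs (u - v).
Proof.
move=> n_in T_ge0; apply: Rabs_sub_le_bounded_deriv (fun s => sigma_diff s n_in)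
  (fun s => sigma_r s n_in) _ => s; exact: sigr_le.
Qed.

(* The radius [X * weight_bound + 1]: unperturbed pre-activations are bounded by
   [X * weight_bound], perturbed ones lie within 1 of them. *)
Lemma layer_map_sub_le d W W' n (a a' : nat -> R) X : (1 <= n <= L)%N -> weights_bounded d W ->
  \big[Rplus/0]_(i < dm d n.-1) Rabs (a i) <= X ->
  \big[Rplus/0]_(k < dm d n) Rabs (preact (dm d) W' n a' k - preact (dm d) W n a k) <= 1 ->
  \big[Rplus/0]_(k < dm d n) Rabs (layer_map (dm d) W' n a' k - layer_map (dm d) W n a k)
  <= b2 n (X * weight_bound + 1) *
     \big[Rplus/0]_(k < dm d n) Rabs (preact (dm d) W' n a' k - preact (dm d) W n a k).
Proof.
move=> n_in Wb a_le diff_le; have X_ge0 : 0 <= X.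
  by apply: Rle_trans a_le; apply: sum_ge0 => *; exact: Rabs_pos.
have T_ge0 : 0 <= X * weight_bound by exact: Rmult_le_pos X_ge0 weight_bound_ge0.
rewrite -sum_mull; apply: sum_le => k _; have z_le := preact_le Wb n_in (ltn_ord k) a_le.
have dz_le := @sum_ord_le _ (fun k => Rabs (preact (dm d) W' n a' k - preact (dm d) W n a k))
  _ (ltn_ord k) (fun _ => Rabs_pos _).
have {}dz_le := Rle_trans _ _ _ dz_le diff_le.
apply: sigma_lipschitz => //; try lra.
by have := Rabs_triang_inv (preact (dm d) W' n a' k) (preact (dm d) W n a k); lra.
Qed.

Lemma act_ext_upto d W W' (x : 'I_d0 -> R) m :
  (forall n i k, (1 <= n <= m)%N -> W' n i k = W n i k) -> actv d W' x m =1 actv d W x m.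
Proof.
elim: m => [|m IH] WW' k //=; congr (sigma m.+1 _); apply: eq_bigr => i _.
by rewrite IH ?WW' ?leqnn // => n i' k' /andP [n_ge1 n_le]; rewrite WW' // n_ge1 leqW.
Qed.

Lemma propagate_ext d W W' k m (a : nat -> R) :
  (forall n i j, (m < n)%N -> W' n i j = W n i j) ->
  propagate (dm d) W' k m a = propagate (dm d) W k m a.
Proof.
elim: k m a => [|k IH] m a WW' //=; rewrite IH => [|n i j /ltnW]; last exact: WW'.
congr propagate; apply: functional_extensionality => j; congr (sigma m.+1 _).
by apply: eq_bigr => i _; rewrite WW'.
Qed.

Lemma act_propagate d W (x : 'I_d0 -> R) m k :
  actv d W x (m + k) =1 propagate (dm d) W k m (actv d W x m).
Proof. by elim: k m => [|k IH] m j; rewrite ?addn0 // addnS -addSn IH. Qed.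

Lemma fnet_propagate d W W' (x : 'I_d0 -> R) m : (m <= L)%N ->
  (forall n i j, (m < n)%N -> W' n i j = W n i j) ->
  @fnet sigma d0 dL L d W' x = (fun o => propagate (dm d) W (L - m) m (actv d W' x m) o).
Proof.
move=> m_le WW'; apply: functional_extensionality => o.
by rewrite -(propagate_ext _ _ _ WW') -act_propagate subnKC.
Qed.

Lemma loss_sub_le_downstream m : (m <= L)%N -> exists K, 0 <= K /\
  forall d W, weights_bounded d W -> losses_bounded d W -> forall xy, List.In xy D ->
  forall c (a' : R -> nat -> R), 0 <= c ->
  near_0plus (fun t => \big[Rplus/0]_(i < dm d m) Rabs (a' t i - actv d W xy.1 m i) <= c * t) ->
  near_0plus (fun t =>
    Rabs (e (fun o => propagate (dm d) W (L - m) m (a' t) o) xy.2 - loss d W xy) <= K * c * t).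
Proof.
move=> m_le; have [k Lmk] : exists k, (L - m)%N = k by exists (L - m)%N.
elim: k m m_le Lmk => [|k IH] m m_le Lmk.
  have -> : m = L by lia.
  exists (b3 loss_bound + 1); split; first by have := b3_ge0 loss_bound_ge0; lra.
  move=> d W _ Lb xy xyD c a' c_ge0 a'_near; rewrite subnn.
  set v := @fnet sigma d0 dL L d W xy.1.
  have [delta [delta_gt0 Lip]] := frechet_grad_lipschitz (@e_grad v xy.2)
    (@grad_e_le v xy.2 _ loss_bound_ge0 (Lb xy xyD)).
  have dist_eq t : \big[Rplus/0]_(i < dm d L) Rabs (a' t i - actv d W xy.1 L i) =
      \big[Rplus/0]_(i < dL) Rabs (a' t i - v i) by rewrite /v /fnet dim_L.
  have := near_0plus_and a'_near (near_0plus_mul_lt c_ge0 delta_gt0).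
  apply: near_0plus_mono => t t_gt0; rewrite dist_eq => -[dist_le dist_lt].
  apply: Rle_trans (Lip (fun o => a' t o) ltac:(lra)) _.
  by rewrite Rmult_assoc; apply: Rmult_le_compat_l => //; have := b3_ge0 loss_bound_ge0; lra.
have m_lt : (m < L)%N by lia.
have [K1 [K1_ge0 down]] := IH m.+1 m_lt ltac:(lia).
have [X [X_ge0 act_le]] := act_l1_bounded m_le; have B_ge0 := weight_bound_ge0.
have m_in : (1 <= m.+1 <= L)%N by rewrite m_lt.
set G := b2 m.+1 (X * weight_bound + 1).
have G_ge0 : 0 <= G by apply: b2_ge0; have := Rmult_le_pos _ _ X_ge0 B_ge0; lra.
exists (K1 * (G * weight_bound)); split; first by apply: Rmult_le_pos => //; apply: Rmult_le_pos.
move=> d W Wb Lb xy xyD c a' c_ge0 a'_near; rewrite Lmk.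
have cB_ge0 : 0 <= weight_bound * c by exact: Rmult_le_pos.
have down_t := down d W Wb Lb xy xyD (G * weight_bound * c)
  (fun t => layer_map (dm d) W m.+1 (a' t))
  ltac:(by apply: Rmult_le_pos => //; apply: Rmult_le_pos).
rewrite (_ : (L - m.+1)%N = k) in down_t; last by lia.
apply: near_0plus_mono (down_t _) => [t t_gt0|]; first by rewrite !Rmult_assoc.
have := near_0plus_and a'_near (near_0plus_mul_lt cB_ge0 Rlt_0_1).
apply: near_0plus_mono => t t_gt0 [dist_le small].
have dpre_le : \big[Rplus/0]_(j < dm d m.+1) Rabs (preact (dm d) W m.+1 (a' t) j -
    preact (dm d) W m.+1 (actv d W xy.1 m) j) <= weight_bound * (c * t).
  under eq_bigr => j _ do rewrite preactB.
  by apply: Rle_trans (sum_preact_le _ Wb m_in) _; rewrite Rmult_comm; exact: Rmult_le_compat_l.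
apply: Rle_trans (layer_map_sub_le m_in Wb (act_le d W Wb xy xyD) _) _.
  by apply: Rle_trans dpre_le _; lra.
by apply: Rle_trans (Rmult_le_compat_l _ _ _ G_ge0 dpre_le) _; right; ring.
Qed.

Definition shrink (S : nat -> nat -> nat -> bool) (W : nat -> nat -> nat -> R) t :
  nat -> nat -> nat -> R :=
  fun l i k => if S l i k then (1 - t) * W l i k else W l i k.

Lemma Omega_sub_le d W W' Q : E d W <= E d W' -> 0 <= Q ->
  (forall xy, List.In xy D -> Rabs (loss d W' xy - loss d W xy) <= Q) ->
  Omega d W - Omega d W' <= Q.
Proof.
rewrite /Eobj => E_le Q_ge0 loss_le; have := sum_sub_le_size loss_le.
set S := \big[Rplus/0]_(xy <- D) loss d W xy in E_le *.
set S' := \big[Rplus/0]_(xy <- D) loss d W' xy in E_le *.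
case: (size D) E_le => [|n] E_le S_le.
  by rewrite /= Rinv_0 !Rmult_0_l in E_le; lra.
have n_gt0 : 0 < INR n.+1 by apply: lt_0_INR; lia.
have := Rmult_le_compat_l _ _ _ (Rlt_le _ _ (Rinv_0_lt_compat _ n_gt0)) S_le.
by rewrite -Rmult_assoc Rinv_l; lra.
Qed.

(* Weights shrunk below layer m act on the loss only through the layer-m activations. *)
Lemma Omega_shrink_tradeoff m : (m <= L)%N -> exists K, 0 <= K /\
  forall d W, @local_min Y sigma d0 dL L e D lambda p d W -> E d W <= B ->
  forall S c, 0 <= c -> (forall l i k, (m < l)%N -> S l i k = false) ->
  (forall xy, List.In xy D -> near_0plus (fun t =>
     \big[Rplus/0]_(i < dm d m) Rabs (actv d (shrink S W t) xy.1 m i - actv d W xy.1 m i)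
     <= c * t)) ->
  exists t, 0 < t < 1 /\ Omega d W - Omega d (shrink S W t) <= K * c * t.
Proof.
move=> m_le; have [K [K_ge0 down]] := loss_sub_le_downstream m_le.
exists K; split=> // d W [eps [eps_gt0 W_min]] E_le S c c_ge0 S_low act_near.
have [Wb Lb] := (weights_bounded_objective E_le, losses_bounded_objective E_le).
have loss_near : near_0plus (fun t => forall xy, List.In xy D ->
    Rabs (loss d (shrink S W t) xy - loss d W xy) <= K * c * t).
  apply: near_0plus_all => xy xyD.
  have := down d W Wb Lb xy xyD c (fun t => actv d (shrink S W t) xy.1 m) c_ge0 (act_near xy xyD).
  apply: near_0plus_mono => t _; rewrite (@fnet_propagate d W (shrink S W t) _ m) //.
  by move=> n i k n_gt; rewrite /shrink S_low.
have [t [t01 [loss_le close]]] :=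
  near_0plus_witness (near_0plus_and loss_near (near_0plus_mul_lt weight_bound_ge0 eps_gt0)).
have Kct_ge0 : 0 <= K * c * t by have := Rmult_le_pos _ _ K_ge0 c_ge0; nra.
exists t; split=> //; apply: Omega_sub_le Kct_ge0 loss_le.
apply: W_min => l i k l_in i_lt k_lt.
have [W_le _] := Wb; have := W_le l i k l_in i_lt k_lt; rewrite /shrink.
case: (S l i k) => Wlik_le; last by rewrite Rminus_diag_eq // Rabs_R0.
rewrite (_ : _ - _ = - (t * W l i k)); last ring.
by rewrite Rabs_Ropp Rabs_mult Rabs_pos_eq; nra.
Qed.

Lemma Omega_shrink_sub d W (S : nat -> nat -> nat -> bool) l0 j0 t :
  (1 <= l0 <= L)%N -> (j0 < dm d l0)%N ->
  (forall l i j, S l i j -> l = l0 /\ j = j0) ->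
  Omega d W - Omega d (shrink S W t) =
  lambda * (fanin_pnorm p (dm d) W l0 j0 - fanin_pnorm p (dm d) (shrink S W t) l0 j0).
Proof.
move=> l0_in j0_lt S_col; rewrite /Omega_in -Rmult_minus_distr_l -sumB; congr (_ * _).
have col_eq l j : (l, j) <> (l0, j0) ->
    fanin_pnorm p (dm d) W l j - fanin_pnorm p (dm d) (shrink S W t) l j = 0.
  move=> lj; rewrite /fanin_pnorm; set c := rpow _ _; set c' := rpow _ _.
  suff -> : c' = c by ring.
  congr rpow; apply: eq_bigr => i _; rewrite /shrink; case S_lij: (S l i j) => //.
  by have [l_eq j_eq] := S_col _ _ _ S_lij; case: lj; rewrite l_eq j_eq.
rewrite (@sum_nat_eq1 _ _ _ l0) => [|//|l _ l_ne]; last first.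
  by rewrite -sumB big1 // => j _; apply: col_eq => -[ll0].
rewrite -sumB (@sum_ord_eq1 _ (fun j => fanin_pnorm p (dm d) W l0 j -
  fanin_pnorm p (dm d) (shrink S W t) l0 j) j0) // => j _ j_ne.
by apply: col_eq => -[jj0].
Qed.

Lemma preact_sub_single_unit dm W n (a a' : nat -> R) j k : (j < dm n.-1)%N ->
  (forall i, (i < dm n.-1)%N -> i <> j -> a' i = a i) ->
  preact dm W n a' k - preact dm W n a k = (a' j - a j) * W n j k.
Proof.
move=> j_lt aa'; rewrite preactB /preact /= (@sum_ord_eq1 _ (fun i => (a' i - a i) * W n i k) j) //.
by move=> i i_lt ij; rewrite aa' //; ring.
Qed.

Lemma preact_sub_weights dm W W' n (a : nat -> R) k :
  preact dm W' n a k - preact dm W n a k =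
  \big[Rplus/0]_(i < dm n.-1) (a i * (W' n i k - W n i k)).
Proof. by rewrite /preact -sumB; apply: eq_bigr => i _; ring. Qed.

Definition fanin_mask n j : nat -> nat -> nat -> bool := fun l _ k => (l == n) && (k == j).
Definition entry_mask n j k0 : nat -> nat -> nat -> bool :=
  fun l i k => [&& l == n, i == j & k == k0].

Lemma act_shrink_below d W S (x : 'I_d0 -> R) m t :
  (forall l i k, (l <= m)%N -> S l i k = false) -> actv d (shrink S W t) x m =1 actv d W x m.
Proof. by move=> S_low; apply: act_ext_upto => l i k /andP [_ l_le]; rewrite /shrink S_low. Qed.

Lemma act_shrink_above d W S (x : 'I_d0 -> R) n t :
  (forall i k, S n.+1 i k = false) ->
  actv d (shrink S W t) x n.+1 =1 layer_map (dm d) W n.+1 (actv d (shrink S W t) x n).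
Proof.
move=> S_n k; rewrite /= /layer_map /preact; congr (sigma n.+1 _).
by apply: eq_bigr => i _; rewrite /shrink S_n.
Qed.

Lemma act_shrink_fanin_sub_le n : (n < L)%N -> exists G, 0 <= G /\
  forall d W, weights_bounded d W -> forall xy, List.In xy D ->
  forall j t, (j < dm d n.+1)%N -> 0 <= t <= 1 ->
  Rabs (actv d (shrink (fanin_mask n.+1 j) W t) xy.1 n.+1 j - actv d W xy.1 n.+1 j)
  <= G * fanin_pnorm p (dm d) W n.+1 j * t.
Proof.
move=> n_lt; have [X [X_ge0 act_le]] := act_l1_bounded (ltnW n_lt).
have n_in : (1 <= n.+1 <= L)%N by rewrite n_lt.
have T_ge0 : 0 <= X * weight_bound by exact: Rmult_le_pos X_ge0 weight_bound_ge0.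
set G := b2 n.+1 (X * weight_bound + 1); have G_ge0 : 0 <= G by apply: b2_ge0; lra.
exists (G * X); split=> [|d W Wb xy xyD j t j_lt t01]; first exact: Rmult_le_pos.
set z := preact (dm d) W n.+1 (actv d W xy.1 n) j.
have -> : actv d (shrink (fanin_mask n.+1 j) W t) xy.1 n.+1 j = sigma n.+1 ((1 - t) * z).
  have low : actv d (shrink (fanin_mask n.+1 j) W t) xy.1 n =1 actv d W xy.1 n.
    by apply: act_shrink_below => l i k l_le; rewrite /fanin_mask; case: eqP => //; lia.
  rewrite /= /z /preact -sum_mull; congr (sigma n.+1 _); apply: eq_bigr => i _.
  rewrite low /shrink /fanin_mask !eqxx /=; ring.
have z_le : Rabs z <= X * weight_bound.
  exact: preact_le Wb n_in j_lt (act_le d W Wb xy xyD).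
apply: Rle_trans (@sigma_lipschitz n.+1 (X * weight_bound + 1) _ z n_in ltac:(lra) _ _) _.
- by rewrite Rabs_mult Rabs_pos_eq; [have := Rabs_pos z; nra | lra].
- lra.
rewrite (_ : _ - z = - (t * z)); last ring.
rewrite Rabs_Ropp Rabs_mult (Rabs_pos_eq t); last lra.
have := @preact_le_fanin d W n.+1 _ _ j (act_le d W Wb xy xyD); rewrite -/z => zN.
have := Rmult_le_compat_l _ _ _ G_ge0 zN; rewrite -/G.
by have := Rabs_pos z; nra.
Qed.

Lemma act_shrink_fanin_other d W (x : 'I_d0 -> R) n j t i : i <> j ->
  actv d (shrink (fanin_mask n.+1 j) W t) x n.+1 i = actv d W x n.+1 i.
Proof.
move=> /eqP ij; rewrite /=; congr (sigma n.+1 _); apply: eq_bigr => i' _.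
rewrite act_shrink_below => [|l i'' k l_le]; last by rewrite /fanin_mask; case: eqP => //; lia.
by rewrite /shrink /fanin_mask (negbTE ij) andbF.
Qed.

Lemma act_shrink_fanin_next_sub_le n : (n.+2 <= L)%N -> exists G, 0 <= G /\
  forall d W, weights_bounded d W -> forall xy, List.In xy D -> forall j t,
  (j < dm d n.+1)%N ->
  let W' := shrink (fanin_mask n.+1 j) W t in
  let delta := Rabs (actv d W' xy.1 n.+1 j - actv d W xy.1 n.+1 j) in
  let R := \big[Rplus/0]_(k < dm d n.+2) Rabs (W n.+2 j k) in
  delta * R <= 1 ->
  \big[Rplus/0]_(k < dm d n.+2) Rabs (actv d W' xy.1 n.+2 k - actv d W xy.1 n.+2 k)
  <= G * (delta * R).
Proof.
move=> n_lt; have [X [X_ge0 act_le]] := @act_l1_bounded n.+1 ltac:(lia).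
have n2_in : (1 <= n.+2 <= L)%N by rewrite n_lt.
exists (b2 n.+2 (X * weight_bound + 1)); split=> [|d W Wb xy xyD j t j_lt W' delta R small].
  by apply: b2_ge0; have := Rmult_le_pos _ _ X_ge0 weight_bound_ge0; lra.
set a := actv d W xy.1 n.+1; set a' := actv d W' xy.1 n.+1.
have dpre k : preact (dm d) W n.+2 a' k - preact (dm d) W n.+2 a k = (a' j - a j) * W n.+2 j k.
  by apply: preact_sub_single_unit => // i _; exact: act_shrink_fanin_other.
have dpre_sum : \big[Rplus/0]_(k < dm d n.+2)
    Rabs (preact (dm d) W n.+2 a' k - preact (dm d) W n.+2 a k) = delta * R.
  by rewrite /R -sum_mull; apply: eq_bigr => k _; rewrite dpre Rabs_mult.
have act_next : actv d W' xy.1 n.+2 =1 layer_map (dm d) W n.+2 a'.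
  by apply: act_shrink_above => i k; rewrite /fanin_mask; case: eqP => //; lia.
under eq_bigr => k _ do rewrite act_next.
by rewrite -dpre_sum; apply: layer_map_sub_le n2_in Wb (act_le d W Wb xy xyD) _; rewrite dpre_sum.
Qed.

(* Shrinking the fan-in of unit j costs lambda t N in Omega_in, while the loss moves by at
   most O(t N R), R being the l1 norm of the fan-out of j. *)
Lemma fanout_lower_bound n : (n.+2 <= L)%N -> exists C, 0 <= C /\
  forall d W, @local_min Y sigma d0 dL L e D lambda p d W -> E d W <= B ->
  forall j, (j < dm d n.+1)%N -> 0 < fanin_pnorm p (dm d) W n.+1 j ->
  lambda <= C * \big[Rplus/0]_(k < dm d n.+2) Rabs (W n.+2 j k).
Proof.
move=> n_lt; have [K [K_ge0 tradeoff]] := Omega_shrink_tradeoff n_lt.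
have [G [G_ge0 unit_le]] := @act_shrink_fanin_sub_le n ltac:(lia).
have [G1 [G1_ge0 next_le]] := act_shrink_fanin_next_sub_le n_lt.
exists (K * (G1 * G)); split=> [|d W Wmin E_le j j_lt N_gt0].
  by apply: Rmult_le_pos => //; apply: Rmult_le_pos.
have Wb := weights_bounded_objective E_le.
set N := fanin_pnorm p (dm d) W n.+1 j in N_gt0 *.
set R := \big[Rplus/0]_(k < dm d n.+2) Rabs (W n.+2 j k).
have R_ge0 : 0 <= R by apply: sum_ge0 => *; exact: Rabs_pos.
have GNR_ge0 : 0 <= G * N * R by apply: Rmult_le_pos => //; apply: Rmult_le_pos; lra.
have [|t [t01 Om_le]] := tradeoff d W Wmin E_le (fanin_mask n.+1 j) (G1 * (G * N * R))
  (Rmult_le_pos _ _ G1_ge0 GNR_ge0)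
  ltac:(by move=> l i k l_gt; rewrite /fanin_mask; case: eqP => //; lia).
  move=> xy xyD; have := near_0plus_and (near_0plus_mul_lt GNR_ge0 Rlt_0_1)
    (near_0plus_mul_lt Rle_0_1 Rlt_0_1).
  apply: near_0plus_mono => t t_gt0 [small t_lt1].
  have dR_le := Rmult_le_compat_r _ _ _ R_ge0 (unit_le d W Wb xy xyD j t j_lt ltac:(lra)).
  apply: Rle_trans (next_le d W Wb xy xyD j t j_lt _) _; first by rewrite -/N -/R in dR_le *; nra.
  by rewrite -/N -/R in dR_le *; apply: Rle_trans (Rmult_le_compat_l _ _ _ G1_ge0 dR_le) _; nra.
have mask_col l i k : fanin_mask n.+1 j l i k -> l = n.+1 /\ k = j.
  by move=> /andP [/eqP -> /eqP ->].
have n1_in : (1 <= n.+1 <= L)%N by lia.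
move: Om_le; rewrite (Omega_shrink_sub W t n1_in j_lt mask_col) -/N.
have -> : fanin_pnorm p (dm d) (shrink (fanin_mask n.+1 j) W t) n.+1 j = (1 - t) * N.
  change N with (pnorm p (dm d n) (fun i => W n.+1 i j)); rewrite -pnormZ //; last lra.
  apply: (@pnorm_ext p (dm d n) (fun i => (1 - t) * W n.+1 i j)
    (fun i => shrink (fanin_mask n.+1 j) W t n.+1 i j)) => i _.
  by rewrite /shrink /fanin_mask !eqxx.
have tN_gt0 : 0 < t * N by apply: Rmult_lt_0_compat; lra.
rewrite (_ : K * _ * t = K * (G1 * G) * R * (t * N)); last ring.
by move=> Om_le; apply: (Rmult_le_reg_r (t * N)) => //; lra.
Qed.

Lemma act_le_fanin n : (n < L)%N -> exists C, 0 <= C /\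
  forall d W, weights_bounded d W -> forall xy, List.In xy D -> forall j, (j < dm d n.+1)%N ->
  Rabs (actv d W xy.1 n.+1 j) <= C * fanin_pnorm p (dm d) W n.+1 j.
Proof.
move=> n_lt; have [X [X_ge0 act_le]] := act_l1_bounded (ltnW n_lt).
have n_in : (1 <= n.+1 <= L)%N by rewrite n_lt.
have T_ge0 : 0 <= X * weight_bound by exact: Rmult_le_pos X_ge0 weight_bound_ge0.
exists (b1 n.+1 (X * weight_bound) * X); split=> [|d W Wb xy xyD j j_lt].
  exact: Rmult_le_pos (b1_ge0 _ T_ge0) X_ge0.
have a_le := act_le d W Wb xy xyD.
apply: Rle_trans (sigma_le n_in T_ge0 (preact_le Wb n_in j_lt a_le)) _.
rewrite Rmult_assoc; apply: Rmult_le_compat_l; first exact: b1_ge0.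
exact: (@preact_le_fanin d W n.+1 _ _ j a_le).
Qed.

Lemma Rpower_split a q : 0 < a -> Rpower a q = Rpower a (q - 1) * a.
Proof. by move=> a_gt0; rewrite -{3}(Rpower_1 _ a_gt0) -Rpower_plus; congr Rpower; ring. Qed.

Lemma Omega_shrink_entry_ge d W n j k0 t : (n.+2 <= L)%N ->
  (j < dm d n.+1)%N -> (k0 < dm d n.+2)%N -> W n.+2 j k0 <> 0 -> 0 < t < 1 ->
  lambda * t * Rpower (Rabs (W n.+2 j k0)) p /
    (p * Rpower (fanin_pnorm p (dm d) W n.+2 k0) (p - 1))
  <= Omega d W - Omega d (shrink (entry_mask n.+2 j k0) W t).
Proof.
move=> n_lt j_lt k0_lt w0 t01; have n2_in : (1 <= n.+2 <= L)%N by rewrite n_lt.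
have mask_col l i k : entry_mask n.+2 j k0 l i k -> l = n.+2 /\ k = k0.
  by move=> /and3P [/eqP -> _ /eqP ->].
rewrite (Omega_shrink_sub W t n2_in k0_lt mask_col) /Rdiv !Rmult_assoc.
apply: Rmult_le_compat_l; first lra.
have := @pnorm_shrink1 p (dm d n.+1) p_ge1 (fun i => W n.+2 i k0) j t j_lt w0 t01.
cbv beta.
rewrite (@pnorm_ext p _ (fun i => shrink (entry_mask n.+2 j k0) W t n.+2 i k0)
  (fun i => if i == j then (1 - t) * W n.+2 i k0 else W n.+2 i k0)); last first.
  by move=> i _; rewrite /shrink /entry_mask !eqxx andbT.
by rewrite /Rdiv Rmult_assoc.
Qed.

Lemma act_shrink_entry_sub_le n : (n.+2 <= L)%N -> exists G, 0 <= G /\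
  forall d W, weights_bounded d W -> forall xy, List.In xy D -> forall j k0 t,
  (j < dm d n.+1)%N -> (k0 < dm d n.+2)%N -> 0 <= t ->
  let W' := shrink (entry_mask n.+2 j k0) W t in
  let delta := t * Rabs (actv d W xy.1 n.+1 j) * Rabs (W n.+2 j k0) in
  delta <= 1 ->
  \big[Rplus/0]_(k < dm d n.+2) Rabs (actv d W' xy.1 n.+2 k - actv d W xy.1 n.+2 k)
  <= G * delta.
Proof.
move=> n_lt; have [X [X_ge0 act_le]] := @act_l1_bounded n.+1 ltac:(lia).
have n2_in : (1 <= n.+2 <= L)%N by rewrite n_lt.
exists (b2 n.+2 (X * weight_bound + 1)).
split=> [|d W Wb xy xyD j k0 t j_lt k0_lt t_ge0 W' delta small].
  by apply: b2_ge0; have := Rmult_le_pos _ _ X_ge0 weight_bound_ge0; lra.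
set a := actv d W xy.1 n.+1.
have low : actv d W' xy.1 n.+1 =1 a.
  by apply: act_shrink_below => l i k l_le; rewrite /entry_mask; case: eqP => //; lia.
have act_next : actv d W' xy.1 n.+2 =1 layer_map (dm d) W' n.+2 a.
  move=> k; change (layer_map (dm d) W' n.+2 (actv d W' xy.1 n.+1) k =
    layer_map (dm d) W' n.+2 a k).
  by rewrite /layer_map /preact; congr (sigma n.+2 _); apply: eq_bigr => i _; rewrite low.
have dpre k : preact (dm d) W' n.+2 a k - preact (dm d) W n.+2 a k =
    if k == k0 then - (t * (a j * W n.+2 j k0)) else 0.
  rewrite preact_sub_weights (@sum_ord_eq1 _ (fun i => a i * (W' n.+2 i k - W n.+2 i k)) j) //.
    by rewrite /W' /shrink /entry_mask !eqxx /=; case: eqP => [->|_]; ring.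
  by move=> i _ /eqP ij; rewrite /W' /shrink /entry_mask (negbTE ij) andbF; ring.
have dpre_sum : \big[Rplus/0]_(k < dm d n.+2)
    Rabs (preact (dm d) W' n.+2 a k - preact (dm d) W n.+2 a k) = delta.
  rewrite (@sum_ord_eq1 _
    (fun k => Rabs (preact (dm d) W' n.+2 a k - preact (dm d) W n.+2 a k)) k0) //.
    by rewrite /delta dpre eqxx Rabs_Ropp !Rabs_mult (Rabs_pos_eq t) // Rmult_assoc.
  by move=> k _ /eqP kk0; rewrite dpre (negbTE kk0) Rabs_R0.
under eq_bigr => k _ do rewrite act_next.
by rewrite -dpre_sum; apply: layer_map_sub_le n2_in Wb (act_le d W Wb xy xyD) _; rewrite dpre_sum.
Qed.

(* Shrinking the single fan-out weight w = W_{n+2}(j,k0) lowers the norm N_k0 by about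
   t |w|^p / N_k0^(p-1), while the loss moves by O(t |a_j| |w|) with |a_j| = O(N_j). *)
Lemma fanout_entry_le n : (n.+2 <= L)%N -> exists C, 0 <= C /\
  forall d W, @local_min Y sigma d0 dL L e D lambda p d W -> E d W <= B ->
  forall j k0, (j < dm d n.+1)%N -> (k0 < dm d n.+2)%N -> W n.+2 j k0 <> 0 ->
  lambda * Rpower (Rabs (W n.+2 j k0)) (p - 1) <=
  p * C * fanin_pnorm p (dm d) W n.+1 j * Rpower (fanin_pnorm p (dm d) W n.+2 k0) (p - 1).
Proof.
move=> n_lt; have [K [K_ge0 tradeoff]] := Omega_shrink_tradeoff n_lt.
have [Ca [Ca_ge0 a_le]] := @act_le_fanin n ltac:(lia).
have [G1 [G1_ge0 next_le]] := act_shrink_entry_sub_le n_lt.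
exists (K * (G1 * Ca)); split=> [|d W Wmin E_le j k0 j_lt k0_lt w0].
  by apply: Rmult_le_pos => //; apply: Rmult_le_pos.
have Wb := weights_bounded_objective E_le.
set N := fanin_pnorm p (dm d) W n.+1 j; set w := W n.+2 j k0 in w0 *.
have N_ge0 : 0 <= N by exact: rpow_ge0.
have w_gt0 : 0 < Rabs w by exact: Rabs_pos_lt.
have cw_ge0 : 0 <= Ca * N * Rabs w by have := Rmult_le_pos _ _ Ca_ge0 N_ge0; nra.
have [|t [t01 Om_le]] := tradeoff d W Wmin E_le (entry_mask n.+2 j k0) _
  (Rmult_le_pos _ _ G1_ge0 cw_ge0)
  ltac:(by move=> l i k l_gt; rewrite /entry_mask; case: eqP => //; lia).
  move=> xy xyD; apply: near_0plus_mono (near_0plus_mul_lt cw_ge0 Rlt_0_1) => t t_gt0 small.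
  have aj_le : t * Rabs (actv d W xy.1 n.+1 j) * Rabs w <= Ca * N * Rabs w * t.
    have := Rmult_le_compat_r (t * Rabs w) _ _ ltac:(nra) (a_le d W Wb xy xyD j j_lt).
    by rewrite -/N; lra.
  have := next_le d W Wb xy xyD j k0 t j_lt k0_lt ltac:(lra); cbv zeta; rewrite -/w => next.
  apply: Rle_trans (next _) _; first lra.
  by apply: Rle_trans (Rmult_le_compat_l _ _ _ G1_ge0 aj_le) _; right; ring.
have := Omega_shrink_entry_ge n_lt j_lt k0_lt w0 t01; rewrite -/w -/N.
set Nk := fanin_pnorm p (dm d) W n.+2 k0; set P := Rpower Nk (p - 1) => Om_ge.
have P_gt0 : 0 < P := exp_pos _.
have twP : 0 < t * Rabs w / (p * P).
  by apply: Rdiv_lt_0_compat; apply: Rmult_lt_0_compat; lra.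
apply: (Rmult_le_reg_r _ _ _ twP); rewrite (Rpower_split _ w_gt0) in Om_ge.
rewrite (_ : lambda * _ * _ = lambda * t * (Rpower (Rabs w) (p - 1) * Rabs w) / (p * P)).
  by apply: Rle_trans Om_ge _; apply: Rle_trans Om_le _; right; field; lra.
by field; lra.
Qed.

Lemma fanout_le_of_small_fanin n eps : (n.+2 <= L)%N -> 0 < eps -> exists c, 0 < c /\
  forall d W, @local_min Y sigma d0 dL L e D lambda p d W -> E d W <= B ->
  forall j, (j < dm d n.+1)%N -> fanin_pnorm p (dm d) W n.+1 j < c ->
  forall k, (k < dm d n.+2)%N -> Rabs (W n.+2 j k) <= eps * fanin_pnorm p (dm d) W n.+2 k.
Proof.
move=> n_lt eps_gt0; have [C [C_ge0 entry_le]] := fanout_entry_le n_lt.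
have E_gt0 : 0 < Rpower eps (p - 1) := exp_pos _.
have pC_gt0 : 0 < p * (C + 1) by apply: Rmult_lt_0_compat; lra.
exists (lambda * Rpower eps (p - 1) / (p * (C + 1))); split.
  by apply: Rdiv_lt_0_compat => //; exact: Rmult_lt_0_compat.
move=> d W Wmin E_le j j_lt N_lt k k_lt; set Nk := fanin_pnorm p (dm d) W n.+2 k.
have Nk_ge0 : 0 <= Nk by exact: rpow_ge0.
have [->|w0] := Req_dec (W n.+2 j k) 0; first by rewrite Rabs_R0; nra.
have w_gt0 := Rabs_pos_lt _ w0.
have w_le : Rabs (W n.+2 j k) <= Nk by exact: (@abs_le_pnorm p _ p_ge1 (fun i => W n.+2 i k)).
apply: Rnot_lt_le => w_gt; have Nk_gt0 : 0 < Nk by lra.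
have := entry_le d W Wmin E_le j k j_lt k_lt w0; rewrite -/Nk.
have : Rpower (eps * Nk) (p - 1) <= Rpower (Rabs (W n.+2 j k)) (p - 1).
  by apply: Rle_Rpower_l; [lra | split; [exact: Rmult_lt_0_compat | lra]].
rewrite -Rpower_mult_distr //; set P := Rpower Nk (p - 1) => pow_le.
have P_gt0 : 0 < P := exp_pos _.
have N_ge0 : 0 <= fanin_pnorm p (dm d) W n.+1 j by exact: rpow_ge0.
have : p * C * fanin_pnorm p (dm d) W n.+1 j < lambda * Rpower eps (p - 1).
  apply: (@Rle_lt_trans _ (p * C * (lambda * Rpower eps (p - 1) / (p * (C + 1))))).
    by apply: Rmult_le_compat_l; [apply: Rmult_le_pos | ]; lra.
  rewrite (_ : p * C * _ = lambda * Rpower eps (p - 1) * (C / (C + 1))); last by field; lra.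
  have : C / (C + 1) < 1.
    by apply: (Rmult_lt_reg_r (C + 1)); [lra | rewrite /Rdiv Rmult_assoc Rinv_l; lra].
  by have := Rmult_lt_0_compat _ _ lambda_gt0 E_gt0; nra.
by move=> small entry; have := Rmult_lt_compat_r _ _ _ P_gt0 small; nra.
Qed.

(* If N_j were tiny, every fan-out weight of j would be at most eps times the fan-in norm
   of its target, so the fan-out of j would be too small for [fanout_lower_bound]. *)
Lemma fanin_pnorm_lower_bound n : (n.+2 <= L)%N -> exists c, 0 < c /\
  forall d W, @proper_B_local_min Y sigma d0 dL L e D lambda p B d W ->
  forall j, (j < dm d n.+1)%N -> c <= fanin_pnorm p (dm d) W n.+1 j.
Proof.
move=> n_lt; have [C [C_ge0 fanout_ge]] := fanout_lower_bound n_lt.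
have CB_ge0 : 0 <= C * weight_bound by exact: Rmult_le_pos C_ge0 weight_bound_ge0.
set eps := lambda / (C * weight_bound + 1).
have eps_gt0 : 0 < eps by apply: Rdiv_lt_0_compat; lra.
have [c [c_gt0 fanout_small]] := fanout_le_of_small_fanin n_lt eps_gt0.
exists c; split=> // d W [Wmin [E_le Wprop]] j j_lt; apply: Rnot_lt_le => N_lt.
have j_lt' := j_lt; rewrite dim_hidden in j_lt'; last lia.
have [[i [i_lt Wij0]] _] := Wprop n.+1 j ltac:(lia) j_lt'.
have N_gt0 : 0 < fanin_pnorm p (dm d) W n.+1 j.
  apply: Rlt_le_trans (Rabs_pos_lt _ Wij0) _.
  exact: (@abs_le_pnorm p _ p_ge1 (fun i => W n.+1 i j)).
have R_le : \big[Rplus/0]_(k < dm d n.+2) Rabs (W n.+2 j k) <= eps * weight_bound.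
  apply: Rle_trans (_ : _ <= \big[Rplus/0]_(k < dm d n.+2) (eps * fanin_pnorm p (dm d) W n.+2 k)) _.
    by apply: sum_le => k _; exact: fanout_small Wmin E_le j j_lt N_lt k (ltn_ord k).
  by rewrite sum_mull; apply: Rmult_le_compat_l; [lra | apply: sum_fanin_pnorm_le E_le _; lia].
have := fanout_ge d W Wmin E_le j j_lt N_gt0.
have : C * (eps * weight_bound) = lambda * (C * weight_bound / (C * weight_bound + 1)).
  by rewrite /eps; field; lra.
have : C * weight_bound / (C * weight_bound + 1) < 1.
  by apply: (Rmult_lt_reg_r (C * weight_bound + 1)); [lra | rewrite /Rdiv Rmult_assoc Rinv_l; lra].
by have := Rmult_le_compat_l _ _ _ C_ge0 R_le; nra.
Qed.

Lemma hidden_width_le n : (n.+2 <= L)%N -> exists M, forall d W,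
  @proper_B_local_min Y sigma d0 dL L e D lambda p B d W -> (d n.+1 <= M)%N.
Proof.
move=> n_lt; have [c [c_gt0 N_ge]] := fanin_pnorm_lower_bound n_lt.
have [M M_gt] := INR_unbounded (weight_bound / c).
exists M => d W Wmin; have [_ [E_le _]] := Wmin.
have : \big[Rplus/0]_(j < dm d n.+1) c <= weight_bound.
  apply: Rle_trans (sum_fanin_pnorm_le (l := n.+1) E_le ltac:(lia)).
  by apply: sum_le => j _; exact: N_ge Wmin j (ltn_ord j).
rewrite sum_const_ord dim_hidden; last lia.
move=> width_le; apply/leP/INR_le; apply: Rlt_le; apply: Rle_lt_trans M_gt.
by apply: (Rmult_le_reg_r c) => //; rewrite /Rdiv Rmult_assoc Rinv_l; lra.
Qed.

Lemma hidden_widths_bounded : exists M, forall d W,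
  @proper_B_local_min Y sigma d0 dL L e D lambda p B d W ->
  forall l, (1 <= l <= L.-1)%N -> (d l <= M)%N.
Proof.
suff bound_upto m : exists M, forall d W,
    @proper_B_local_min Y sigma d0 dL L e D lambda p B d W ->
    forall l, (1 <= l <= m)%N -> (l <= L.-1)%N -> (d l <= M)%N.
  have [M M_ge] := bound_upto L.-1; exists M => d W Wmin l l_in.
  by apply: (M_ge _ _ Wmin l l_in); case/andP: l_in.
elim: m => [|m [M M_ge]]; first by exists 0%N => d W _ l; lia.
case: (leqP m.+1 L.-1) => m_le; last first.
  by exists M => d W Wmin l l_in l_le; apply: (M_ge d W Wmin l _ l_le); lia.
have [M' M'_ge] := @hidden_width_le m ltac:(lia).
exists (maxn M M') => d W Wmin l l_in l_le.
have [->|l_ne] := eqVneq l m.+1; first by have := M'_ge d W Wmin; lia.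
by have := M_ge d W Wmin l ltac:(lia) l_le; lia.
Qed.

End ProperLocalMinima.

Theorem lemma2
  (L d0 dL : nat) (HL : (1 <= L)%N)
  (sigma : nat -> R -> R)
  (sigl sigr : nat -> R -> R)
  (Hsigl : forall l s, (1 <= l <= L)%N -> left_deriv (sigma l) s (sigl l s))
  (Hsigr : forall l s, (1 <= l <= L)%N -> right_deriv (sigma l) s (sigr l s))
  (b1 b2 : nat -> R -> R)
  (Hb1nn : forall l T, (0 <= T)%R -> (0 <= b1 l T)%R)
  (Hb2nn : forall l T, (0 <= T)%R -> (0 <= b2 l T)%R)
  (Hb1 : forall l T s, (1 <= l <= L)%N -> (0 <= T)%R -> (Rabs s <= T)%R ->
           (Rabs (sigma l s) <= b1 l T * Rabs s)%R)
  (Hb2 : forall l T s, (1 <= l <= L)%N -> (0 <= T)%R -> (Rabs s <= T)%R ->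
           (Rabs (sigl l s) <= b2 l T)%R /\ (Rabs (sigr l s) <= b2 l T)%R)
  (Hdiff : forall l s, (1 <= l <= L)%N -> exists g, derivable_pt_lim (sigma l) s g)
  (Y : Type) (e : ('I_dL -> R) -> Y -> R)
  (Hpos : forall v y, (0 <= e v y)%R)
  (b3 : R -> R) (Hb3nn : forall T, (0 <= T)%R -> (0 <= b3 T)%R)
  (grad_e : ('I_dL -> R) -> Y -> 'I_dL -> R)
  (Hgrad : forall v y, frechet_grad (fun u => e u y) v (grad_e v y))
  (Hb3 : forall v y T, (0 <= T)%R -> (e v y <= T)%R ->
           (supnorm (grad_e v y) <= b3 T)%R)
  (D : seq (('I_d0 -> R) * Y))
  (lambda p : R) (Hlambda : (0 < lambda)%R) (Hp : (1 <= p)%R)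
  (B : R) :
  exists M : nat,
    forall (d : nat -> nat) (W : nat -> nat -> nat -> R),
      @proper_B_local_min Y sigma d0 dL L e D lambda p B d W ->
      forall l, (1 <= l <= L.-1)%N -> (d l <= M)%N.
Proof.
have sigr_le l T s : (1 <= l <= L)%N -> 0 <= T -> Rabs s <= T -> Rabs (sigr l s) <= b2 l T.
  by move=> l_in T_ge0 s_le; case: (Hb2 l T s l_in T_ge0 s_le).
exact: (@hidden_widths_bounded L d0 dL sigma sigr b1 b2 HL Hsigr Hdiff Hb1nn Hb2nn Hb1 sigr_le
  Y e b3 grad_e Hpos Hb3nn Hgrad Hb3 D lambda p B Hlambda Hp).
Qed.
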